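(* Let $W(x_1,\dots,x_n)$ be an invertible, non-degenerate, quasi-homogeneous polynomial with $2\sum_jw_j=d$, let $J_W^2\in G\subseteq\operatorname{SL}_W$, $V=x_0^2+W$, $J_V=\sigma J_W$, and $\mathcal H=\mathcal H_{G[\sigma,J_W]}(V)^{G[J_V]}$. For $L\in\{G,\sigma G,J_WG,J_VG\}$ set $[\mathcal H]_L=\bigoplus_{g\in L}\operatorname{Jac}(V_g)^{G[J_V]}$. Then $\mathcal H=[\mathcal H]_G\oplus[\mathcal H]_{\sigma G}\oplus[\mathcal H]_{J_WG}\oplus[\mathcal H]_{J_VG}$, where $[\mathcal H]_G\oplus[\mathcal H]_{J_VG}$ is $\mathbb Z\times\mathbb Z$-graded and $[\mathcal H]_{\sigma G}\oplus[\mathcal H]_{J_WG}$ is $(\tfrac12+\mathbb Z)\times(\tfrac12+\mathbb Z)$-graded.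
   Context: $W=\sum_i\prod_jx_j^{m_{i,j}}$ with invertible exponent matrix, weights $w_j$, degree $d$, non-degenerate. $\operatorname{Aut}_W$: diagonal symmetries; $\operatorname{SL}_W=\operatorname{Aut}_W\cap\operatorname{SL}(n;\mathbb C)$; $J_W=(e^{2\pi iw_j/d})_j$, regarded as a symmetry of $V$ fixing $x_0$ (as is $G$); $\sigma=(-1,1,\dots,1)$ on $(x_0,\dots,x_n)$; $V$ has weights $(d/2,w_1,\dots,w_n)$ and degree $d$, and $J_V=\sigma J_W$ is its grading element. $L[h]$ is the group generated by $L$ and $h$. For $g$ a diagonal symmetry of $V$, $F_g$ is the set of indices of $g$-fixed coordinates, $V_g$ the restriction, $\operatorname{Jac}(V_g)=\mathbb C[x_j:j\in F_g]/(\partial_jV_g)\cdot\bigwedge_{j\in F_g}dx_j$; $\mathcal H_S(V)^K=\bigoplus_{g\in S}\operatorname{Jac}(V_g)^K$, where $h=\frac1D(p_0,\dots,p_n)$ acts on $\prod x_j^{a_j}\bigwedge dx_j$ by $e^{2\pi i\sum_{j\in F_g}(a_j+1)p_j/D}$. Bi-degree of that form: $(\#F_g-\deg+\operatorname{a}(g),\deg+\operatorname{a}(g))$, $\deg=\sum_{j\in F_g}(a_j+1)w_j/d$ (with $w_0=d/2$), $\operatorname{a}(g)=\sum_jp_j/D$, $0\le p_j<D$. *)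

From HB Require Import structures.
From mathcomp Require Import all_boot all_order all_algebra all_field.
From mathcomp Require Import mpoly.
Set Implicit Arguments. Unset Strict Implicit. Unset Printing Implicit Defensive.
Import Order.TTheory GRing.Theory Num.Theory.
Local Open Scope ring_scope.

(* Coordinates x_0, x_1, ..., x_n are indexed by 'I_n.+1; x_0 is ord0 and
   x_{k+1} is (lift ord0 k) for k : 'I_n.
   A diagonal symmetry (e^{2 pi i p_0/D}, ..., e^{2 pi i p_n/D}) with
   0 <= p_j < D is represented by its exponent vector j |-> p_j/D in [0,1)
   (all diagonal symmetries of W, V have root-of-unity entries since the
   exponent matrix is invertible). *)
Definition dsym (n : nat) := 'I_n.+1 -> rat.

Definition fracpart (q : rat) : rat := q - (Num.floor q)%:~R.
Definition isint (q : rat) : Prop := q \is a Num.int.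
Definition ishalfint (q : rat) : Prop := isint (q - 1 / 2).

Definition dmul n (g h : dsym n) : dsym n := fun j => fracpart (g j + h j).
Definition done_ n : dsym n := fun _ => 0.
Arguments done_ n : clear implicits.

Inductive gen n (S : dsym n -> Prop) : dsym n -> Prop :=
| gen_one : gen S (done_ n)
| gen_in g : S g -> gen S g
| gen_mul g h : gen S g -> gen S h -> gen S (dmul g h).

Definition coset n (G : dsym n -> Prop) (x g : dsym n) : Prop :=
  exists h, G h /\ g = dmul x h.

Definition sigma n : dsym n := fun j => if j == ord0 then 1 / 2 else 0.
Arguments sigma n : clear implicits.
Definition JW n (w : 'I_n -> nat) (d : nat) : dsym n := fun j =>
  match unlift ord0 j with
  | Some k => fracpart ((w k)%:R / d%:R)
  | None => 0
  end.
Definition JV n w d : dsym n := dmul (sigma n) (JW w d).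

Definition Wpoly n (E : 'M[nat]_n) : {mpoly algC[n]} :=
  \sum_(i < n) \prod_(j < n) 'X_j ^+ E i j.

(* V_g : restriction of V to the fixed locus {x_j = 0, j notin F_g} *)
Definition Fg n (g : dsym n) : pred 'I_n.+1 := fun j => g j == 0.
Definition Vres n (E : 'M[nat]_n) (g : dsym n) : {mpoly algC[n.+1]} :=
  (if g ord0 == 0 then 'X_ord0 ^+ 2 else 0) +
  \sum_(i < n | [forall j, (E i j != 0%N) ==> (g (lift ord0 j) == 0)])
     \prod_(j < n) 'X_(lift ord0 j) ^+ E i j.

Definition mono n (a : 'I_n.+1 -> nat) : {mpoly algC[n.+1]} :=
  \prod_(j < n.+1) 'X_j ^+ a j.

(* For p and V_g only
   involving the variables of F_g, this is equivalent to membership in the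
   ideal of C[x_j : j in F_g] (substitute 0 for the other variables). *)
Definition in_jac n (E : 'M[nat]_n) (g : dsym n) (p : {mpoly algC[n.+1]}) :
  Prop :=
  exists c : 'I_n.+1 -> {mpoly algC[n.+1]},
    p = \sum_(j < n.+1 | Fg g j) c j * mderiv j (Vres E g).

Definition qV n (w : 'I_n -> nat) (d : nat) (j : 'I_n.+1) : rat :=
  match unlift ord0 j with
  | Some k => (w k)%:R / d%:R
  | None => 1 / 2
  end.

(* h acts on x^a /\_{j in F_g} dx_j by exp(2 pi i sum_{j in F_g} (a_j+1) h_j) *)
Definition form_invariant n (K : dsym n -> Prop) (g : dsym n)
  (a : 'I_n.+1 -> nat) : Prop :=
  forall h, K h -> isint (\sum_(j < n.+1 | Fg g j) (a j).+1%:R * h j).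

Definition degf n w d (g : dsym n) (a : 'I_n.+1 -> nat) : rat :=
  \sum_(j < n.+1 | Fg g j) (a j).+1%:R * qV w d j.
Definition age n (g : dsym n) : rat := \sum_(j < n.+1) g j.

Definition bideg n w d (g : dsym n) (a : 'I_n.+1 -> nat) : rat * rat :=
  ((#|Fg g|)%:R - degf w d g a + age g, degf w d g a + age g).

Definition jac_inv_form n E (K : dsym n -> Prop) (g : dsym n)
  (a : 'I_n.+1 -> nat) : Prop :=
  (forall j, ~~ Fg g j -> a j = 0%N) /\ form_invariant K g a /\
  ~ in_jac E g (mono a).

From HB Require Import structures.
From mathcomp Require Import all_boot all_order all_algebra all_field.
From mathcomp Require Import mpoly.
From mathcomp Require Import ring zify.
From Stdlib Require Import FunctionalExtensionality.
Import Order.TTheory GRing.Theory Num.Theory.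
Local Open Scope ring_scope.
Set Implicit Arguments. Unset Strict Implicit.

(* Diagonal symmetries form an abelian group under [dmul] (on reduced exponent
   vectors), so G[sigma, J_W] consists of the cosets of G by the four products
   sigma^b1 J_W^b2: sigma^2 = 1 and J_W^2 lies in G.  Two invariants separate
   these cosets: the exponent of x_0 (0 on G and J_W G, 1/2 on sigma G and
   J_V G) and the age modulo Z (integral on G and J_V G, half-integral on
   sigma G and J_W G, since sigma and J_W both have age 1/2 when
   2 sum_j w_j = d).  Invariance under J_V, whose exponent vector is the
   weight vector q of V, makes the degree of every G[J_V]-invariant form
   integral; hence both entries of its bidegree lie in age(g) + Z. *)

Lemma isint_fracpart_sub (q : rat) : isint (fracpart q - q).
Proof.
by rewrite /fracpart addrAC subrr add0r /isint rpredN intr_int.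
Qed.

Lemma eq_fracpart (x y : rat) : isint (x - y) -> fracpart x = fracpart y.
Proof.
move=> xy; rewrite /fracpart -[x](subrK y) floorDzr // rmorphD /= floorK //.
ring.
Qed.

Lemma fracpart_idem (q : rat) : fracpart (fracpart q) = fracpart q.
Proof. exact/eq_fracpart/isint_fracpart_sub. Qed.

Lemma fracpart_small (q : rat) : 0 <= q -> q < 1 -> fracpart q = q.
Proof.
by move=> q_ge0 q_lt1; rewrite /fracpart (@floor_def _ q 0) ?subr0 ?q_ge0.
Qed.

Lemma isint_halfint_false (q : rat) : isint q -> ishalfint q -> False.
Proof.
move=> qZ qhalfZ; suff : isint (1 / 2 : rat) by [].
by rewrite -[1 / 2](subKr q); apply: rpredB.
Qed.

Section DiagonalSymmetries.
Variable n : nat.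
Implicit Types g h x y : dsym n.

Definition reduced g := forall j, g j = fracpart (g j).

Lemma reduced_dmul g h : reduced (dmul g h).
Proof. by move=> j; rewrite /dmul fracpart_idem. Qed.

Lemma reduced_sigma : reduced (sigma n).
Proof.
by move=> j; rewrite /sigma; case: (j == ord0); rewrite fracpart_small.
Qed.

Lemma dmulC : commutative (@dmul n).
Proof. by move=> g h; apply: functional_extensionality => j; rewrite /dmul addrC. Qed.

Lemma dmulA : associative (@dmul n).
Proof.
move=> g h k; apply: functional_extensionality => j; rewrite /dmul.
apply: eq_fracpart.
have -> : forall a b c : rat, a + fracpart (b + c) - (fracpart (a + b) + c) =
    (fracpart (b + c) - (b + c)) - (fracpart (a + b) - (a + b)) by move=> *; ring.
by apply: rpredB; apply: isint_fracpart_sub.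
Qed.

Lemma dmulACA : interchange (@dmul n) (@dmul n).
Proof. by move=> g h x y; rewrite -!dmulA (dmulA h) (dmulC h) !dmulA. Qed.

Lemma dmul1g g : reduced g -> dmul (done_ n) g = g.
Proof.
by move=> g_red; apply: functional_extensionality => j; rewrite /dmul add0r -g_red.
Qed.

Lemma dmul_sigma_sigma : dmul (sigma n) (sigma n) = done_ n.
Proof.
apply: functional_extensionality => j; rewrite /dmul /sigma /done_.
by case: (j == ord0); [rewrite (@eq_fracpart _ 0) | ]; rewrite ?fracpart_small.
Qed.

Lemma age_dmul g h : isint (age (dmul g h) - (age g + age h)).
Proof.
rewrite /age -big_split -sumrB; apply: rpred_sum => j _.
exact: isint_fracpart_sub.
Qed.

Lemma age_sigma : age (sigma n) = 1 / 2.
Proof.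
by rewrite /age big_ord_recl /sigma eqxx big1 ?addr0 // => j _.
Qed.

Definition dexpb x (b : bool) : dsym n := if b then x else done_ n.

Lemma dexpbM x b c :
  dmul (dexpb x b) (dexpb x c) = dmul (dexpb x (b (+) c)) (dexpb (dmul x x) (b && c)).
Proof.
case: b c => [] [] //=; first by rewrite dmul1g //; apply: reduced_dmul.
exact: dmulC.
Qed.

Section Cosets.
Variable G : dsym n -> Prop.
Hypothesis G1 : G (done_ n).
Hypothesis GM : forall g h, G g -> G h -> G (dmul g h).
Hypothesis G_reduced : forall g, G g -> reduced g.

Lemma cosetM x y g h : coset G x g -> coset G y h -> coset G (dmul x y) (dmul g h).
Proof.
move=> [k [Gk ->]] [l [Gl ->]]; exists (dmul k l); split; first exact: GM.
exact: dmulACA.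
Qed.

Lemma coset_absorb x y g : G x -> coset G (dmul y x) g -> coset G y g.
Proof.
by move=> Gx [k [Gk ->]]; exists (dmul x k); split; [exact: GM | rewrite dmulA].
Qed.

Lemma coset_refl x : reduced x -> coset G x x.
Proof. by move=> x_red; exists (done_ n); split; rewrite // dmulC dmul1g. Qed.

Lemma coset1 g : coset G (done_ n) g <-> G g.
Proof.
split; first by move=> [k [Gk ->]]; rewrite dmul1g; last exact: G_reduced.
by move=> Gg; exists g; rewrite dmul1g; last exact: G_reduced.
Qed.

Lemma G_dexpb x b : G x -> G (dexpb x b).
Proof. by case: b. Qed.

Section ExtensionByInvolutionsModG.
Variables s t : dsym n.
Hypotheses (s_red : reduced s) (t_red : reduced t).
Hypotheses (G_s2 : G (dmul s s)) (G_t2 : G (dmul t t)).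

Let rep b1 b2 := dmul (dexpb s b1) (dexpb t b2).

Lemma coset_repM b1 b2 c1 c2 g h :
  coset G (rep b1 b2) g -> coset G (rep c1 c2) h ->
  coset G (rep (b1 (+) c1) (b2 (+) c2)) (dmul g h).
Proof.
move=> gb hc; have := cosetM gb hc; rewrite /rep dmulACA !dexpbM dmulACA.
by apply: coset_absorb; apply: GM; apply: G_dexpb.
Qed.

Lemma rep00 : rep false false = done_ n.
Proof. by rewrite /rep /= dmul1g // => j; rewrite fracpart_small. Qed.

Lemma rep10 : rep true false = s.
Proof. by rewrite /rep /= dmulC dmul1g. Qed.

Lemma rep01 : rep false true = t.
Proof. by rewrite /rep /= dmul1g. Qed.

Lemma gen_repP g :
  gen (fun g => G g \/ g = s \/ g = t) g <-> exists b1 b2, coset G (rep b1 b2) g.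
Proof.
split.
  elim=> [|x [Gx | [-> | ->]] | x y _ [b1 [b2 gx]] _ [c1 [c2 gy]]].
  - by exists false, false; rewrite rep00; apply/coset1.
  - by exists false, false; rewrite rep00; apply/coset1.
  - by exists true, false; rewrite rep10; apply: coset_refl.
  - by exists false, true; rewrite rep01; apply: coset_refl.
  - by exists (b1 (+) c1), (b2 (+) c2); apply: coset_repM.
move=> [b1 [b2 [k [Gk ->]]]]; apply: gen_mul; last by apply: gen_in; left.
by apply: gen_mul; [case: b1 | case: b2]; do ?[exact: gen_one]; apply: gen_in; auto.
Qed.

Lemma gen_cosetsP g :
  gen (fun g => G g \/ g = s \/ g = t) g <->
  G g \/ coset G s g \/ coset G t g \/ coset G (dmul s t) g.
Proof.
rewrite gen_repP; split.
  move=> [[] [[] gb]].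
  - by right; right; right.
  - by right; left; rewrite -rep10.
  - by right; right; left; rewrite -rep01.
  - by left; apply/coset1; rewrite -rep00.
move=> [/coset1 | [| [|]]] gb; [exists false, false | exists true, false |
  exists false, true | exists true, true]; by rewrite ?rep00 ?rep10 ?rep01.
Qed.

End ExtensionByInvolutionsModG.
End Cosets.

Lemma coset_ord0 (G : dsym n -> Prop) x g :
  (forall h, G h -> h ord0 = 0) -> reduced x -> coset G x g -> g ord0 = x ord0.
Proof. by move=> G0 x_red [h [Gh ->]]; rewrite /dmul (G0 _ Gh) addr0 -x_red. Qed.

Lemma coset_age (G : dsym n -> Prop) x g :
  (forall h, G h -> isint (age h)) -> coset G x g -> isint (age g - age x).
Proof.
move=> Gage [h [Gh ->]].
have -> : age (dmul x h) - age x = age (dmul x h) - (age x + age h) + age h by ring.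
by apply: rpredD; [exact: age_dmul | exact: Gage].
Qed.

Lemma coset_age_int (G : dsym n -> Prop) x g :
  (forall h, G h -> isint (age h)) -> isint (age x) -> coset G x g -> isint (age g).
Proof.
move=> Gage xZ /(coset_age Gage) gx.
by rewrite -[age g](subrK (age x)); apply: rpredD.
Qed.

Lemma coset_age_halfint (G : dsym n -> Prop) x g :
  (forall h, G h -> isint (age h)) -> ishalfint (age x) -> coset G x g ->
  ishalfint (age g).
Proof.
move=> Gage xZ /(coset_age Gage) gx.
by rewrite /ishalfint -[age g](subrK (age x)) -addrA; apply: rpredD.
Qed.

End DiagonalSymmetries.

Section Weights.
Variables (n : nat) (w : 'I_n -> nat) (d : nat).
Hypotheses (d_gt0 : (0 < d)%N) (half_weight_sum : (2 * \sum_(j < n) w j = d)%N).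

Lemma fracpart_weight k : fracpart ((w k)%:R / d%:R : rat) = (w k)%:R / d%:R.
Proof.
apply: fracpart_small; first by rewrite divr_ge0.
rewrite ltr_pdivrMr ?ltr0n // mul1r ltr_nat.
have : (w k <= \sum_(j < n) w j)%N by rewrite (bigD1 k) //= leq_addr.
by move: d_gt0 half_weight_sum; lia.
Qed.

Lemma JV_qV : JV w d = qV w d.
Proof.
apply: functional_extensionality => j; rewrite /JV /dmul /JW /qV /sigma.
case: (unliftP ord0 j) => [k -> | ->]; last by rewrite eqxx addr0 fracpart_small.
by rewrite eq_sym (negbTE (neq_lift _ _)) add0r fracpart_idem fracpart_weight.
Qed.

Lemma age_JW : age (JW w d) = 1 / 2.
Proof.
rewrite /age big_ord_recl /JW unlift_none add0r.
under eq_bigr => k _ do rewrite liftK fracpart_weight.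
rewrite -mulr_suml -natr_sum -half_weight_sum natrM.
have sum_neq0 : ((\sum_(j < n) w j)%:R : rat) != 0.
  by rewrite pnatr_eq0 -lt0n; move: d_gt0; rewrite -half_weight_sum muln_gt0.
by field; rewrite sum_neq0.
Qed.

Lemma isint_age_JV : isint (age (JV w d)).
Proof.
have := age_dmul (sigma n) (JW w d); rewrite age_sigma age_JW => ageZ.
by rewrite -[age _](subrK 1); apply: rpredD ageZ _.
Qed.

End Weights.

Lemma reduced_JW n w d : reduced (@JW n w d).
Proof.
by move=> j; rewrite /JW; case: (unlift ord0 j) => [k|]; rewrite ?fracpart_idem.
Qed.

Lemma bideg_int n w d (g : dsym n) a :
  isint (degf w d g a) -> isint (age g) ->
  isint (bideg w d g a).1 /\ isint (bideg w d g a).2.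
Proof.
move=> degZ ageZ; split; apply: rpredD => //.
by apply: rpredB; first exact: natr_int.
Qed.

Lemma bideg_halfint n w d (g : dsym n) a :
  isint (degf w d g a) -> ishalfint (age g) ->
  ishalfint (bideg w d g a).1 /\ ishalfint (bideg w d g a).2.
Proof.
move=> degZ ageZ; split; rewrite /ishalfint /= -addrA; apply: rpredD => //.
by apply: rpredB; first exact: natr_int.
Qed.

Theorem lemma5p7 (n : nat) (E : 'M[nat]_n) (w : 'I_n -> nat) (d : nat)
  (G : dsym n -> Prop) :
  (* W = sum_i prod_j x_j^{E i j} invertible, quasi-homogeneous *)
  (0 < d)%N -> (forall j, 0 < w j)%N ->
  \det (map_mx (fun k : nat => k%:R : rat) E) != 0 ->
  (forall i, \sum_(j < n) E i j * w j = d)%N ->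
  (* non-degenerate: isolated critical point at the origin *)
  (forall x : 'I_n -> algC,
      (forall j, (mderiv j (Wpoly E)).@[x] = 0) -> forall j, x j = 0) ->
  (2 * \sum_(j < n) w j = d)%N ->
  (* G is a subgroup of SL_W, regarded as fixing x_0 *)
  G (done_ n) -> (forall g h, G g -> G h -> G (dmul g h)) ->
  (forall g, G g -> forall j, g j = fracpart (g j)) ->
  (forall g, G g -> g ord0 = 0) ->
  (forall g, G g -> forall i,
       isint (\sum_(j < n) (E i j)%:R * g (lift ord0 j))) ->
  (forall g, G g -> isint (\sum_(j < n.+1) g j)) ->
  (* J_W^2 in G *)
  G (dmul (JW w d) (JW w d)) ->
  let S := gen (fun g => G g \/ g = sigma n \/ g = JW w d) in
  let K := gen (fun g => G g \/ g = JV w d) in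
  (* decomposition of the index set G[sigma, J_W] into the four cosets *)
  (forall g, S g <->
     G g \/ coset G (sigma n) g \/ coset G (JW w d) g \/ coset G (JV w d) g) /\
  (forall g, ~ (G g /\ coset G (sigma n) g)) /\
  (forall g, ~ (G g /\ coset G (JW w d) g)) /\
  (forall g, ~ (G g /\ coset G (JV w d) g)) /\
  (forall g, ~ (coset G (sigma n) g /\ coset G (JW w d) g)) /\
  (forall g, ~ (coset G (sigma n) g /\ coset G (JV w d) g)) /\
  (forall g, ~ (coset G (JW w d) g /\ coset G (JV w d) g)) /\
  (* [H]_G + [H]_{J_V G} is Z x Z-graded *)
  (forall g a, G g \/ coset G (JV w d) g -> jac_inv_form E K g a ->
     isint (bideg w d g a).1 /\ isint (bideg w d g a).2) /\
  (* [H]_{sigma G} + [H]_{J_W G} is (1/2+Z) x (1/2+Z)-graded *)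
  (forall g a, coset G (sigma n) g \/ coset G (JW w d) g ->
     jac_inv_form E K g a ->
     ishalfint (bideg w d g a).1 /\ ishalfint (bideg w d g a).2).
Proof.
move=> d_gt0 _ _ _ _ CY G1 GM G_red G0 _ Gage G_JW2 S K.
have G_sigma2 : G (dmul (sigma n) (sigma n)) by rewrite dmul_sigma_sigma.
have ord0_sigma g : coset G (sigma n) g -> g ord0 = 1 / 2.
  by move/(coset_ord0 G0 (@reduced_sigma n)) ->; rewrite /sigma eqxx.
have ord0_JW g : coset G (JW w d) g -> g ord0 = 0.
  by move/(coset_ord0 G0 (reduced_JW w d)) ->; rewrite /JW unlift_none.
have ord0_JV g : coset G (JV w d) g -> g ord0 = 1 / 2.
  move/(coset_ord0 G0 (reduced_dmul _ _)) ->.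
  by rewrite /dmul /sigma /JW eqxx unlift_none addr0 fracpart_small.
have JV_int := isint_age_JV d_gt0 CY.
have sigma_half : ishalfint (age (sigma n)) by rewrite age_sigma /ishalfint subrr.
have JW_half : ishalfint (age (JW w d)) by rewrite age_JW // /ishalfint subrr.
have degZ g a : jac_inv_form E K g a -> isint (degf w d g a).
  by move=> [_ [inv _]]; have := inv _ (gen_in (or_intror erefl)); rewrite JV_qV.
split; first exact: (gen_cosetsP G1 GM G_red (@reduced_sigma n) (reduced_JW w d)
  G_sigma2 G_JW2).
split; first by move=> g [/G0 g0 /ord0_sigma]; rewrite g0.
split; first by move=> g [/Gage gZ /(coset_age_halfint Gage JW_half)]; apply: isint_halfint_false gZ.
split; first by move=> g [/G0 g0 /ord0_JV]; rewrite g0.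
split; first by move=> g [/ord0_sigma g0 /ord0_JW]; rewrite g0.
split.
  move=> g [/(coset_age_halfint Gage sigma_half) gh /(coset_age_int Gage JV_int) gZ].
  exact: isint_halfint_false gZ gh.
split; first by move=> g [/ord0_JW g0 /ord0_JV]; rewrite g0.
split=> [g a [Gg | gV] | g a [gs | gW]] /degZ degfZ.
- exact: bideg_int degfZ (Gage _ Gg).
- exact: bideg_int degfZ (coset_age_int Gage JV_int gV).
- exact: bideg_halfint degfZ (coset_age_halfint Gage sigma_half gs).
- exact: bideg_halfint degfZ (coset_age_halfint Gage JW_half gW).
Qed.
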